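(* Let $\Omega_n=\dfrac{\pi^{n/2}}{\Gamma\left(\frac n2+1\right)}$ for $n\in\mathbb{N}_0$, and for $j\in\mathbb{N}$ let \[ \lambda_j=(-1)^j\left\{2B_{j+1}(1)-B_{j+1}\left(\tfrac12\right)-B_{j+1}\left(\tfrac32\right)\right\}\frac{2^j}{j(j+1)}, \] where $B_m(x)$ are the Bernoulli polynomials. Let $t_0=\frac12$ and let $t_1,t_2,\dots$ be the solution of the infinite system \[ \sum_{j=1}^m(-1)^{j+1}\frac{t_{m-j}}{j}=\lambda_m\qquad(m\in\mathbb{N}). \] Then, as $n\to\infty$, the following asymptotic formula holds: \[ \frac{\Omega_n^2}{\Omega_{n-1}\Omega_{n+1}}\sim\left(1+\frac1n\right)^{\sum_{j=0}^\infty\frac{t_j}{n^j}}. \]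
   Context: $\Omega_n$ is the volume of the unit ball in $\mathbb{R}^n$; $\Gamma$ is Euler's gamma function. The Bernoulli polynomials are defined by $\frac{te^{xt}}{e^t-1}=\sum_{m\ge0}B_m(x)\frac{t^m}{m!}$. The formula is understood as an asymptotic expansion: for every $N$, $\ln\frac{\Omega_n^2}{\Omega_{n-1}\Omega_{n+1}}-\ln\left(1+\frac1n\right)\sum_{j=0}^{N}t_jn^{-j}=O(n^{-N-2})$ as $n\to\infty$. *)

From Stdlib Require Import Reals.
From Coquelicot Require Import Coquelicot.
Open Scope R_scope.

Definition Gamma (x : R) : R :=
  RInt_gen (fun t => Rpower t (x - 1) * exp (- t))
           (at_right 0) (Rbar_locally p_infty).

Definition Omega (n : nat) : R :=
  Rpower PI (INR n / 2) / Gamma (INR n / 2 + 1).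

(* B is the family of Bernoulli polynomials: t e^(xt)/(e^t - 1) = sum_m B_m(x) t^m/m!
   (the generating function, for 0 < |t| < 1, inside the radius 2 pi). *)
Definition is_bernoulli_polys (B : nat -> R -> R) : Prop :=
  forall x t, t <> 0 -> Rabs t < 1 ->
    is_series (fun m => B m x * t ^ m / INR (Factorial.fact m))
              (t * exp (x * t) / (exp t - 1)).

Definition lambda (B : nat -> R -> R) (j : nat) : R :=
  (-1) ^ j * (2 * B (S j) 1 - B (S j) (1/2) - B (S j) (3/2))
  * 2 ^ j / (INR j * INR (S j)).

Definition is_t_sequence (B : nat -> R -> R) (t : nat -> R) : Prop :=
  t O = 1/2 /\
  forall m : nat, (1 <= m)%nat ->
    sum_n_m (fun j => (-1) ^ (S j) * t (m - j)%nat / INR j) 1 m = lambda B m.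

From Stdlib Require Import Reals Lra Lia.
From Stdlib Require Classical_Prop.
From Coquelicot Require Import Coquelicot.
Open Scope R_scope.

(* Let r_n = Omega_n^2 / (Omega_(n-1) Omega_(n+1)) = Gamma(n/2+1/2) Gamma(n/2+3/2) / Gamma(n/2+1)^2.
   The functional equation of Gamma gives r_n r_(n+1) = (n+2)/(n+1) and its log-convexity
   gives r_n >= 1.  With u = 1/n, so that 1/(n+1) = u/(1+u), the sequence f_n = ln r_n
   thus satisfies f_n + f_(n+1) = ln(1+2u) - ln(1+u) and 0 <= f_n <= u.
   The truncated candidate S(u) = ln(1+u) (t_0 + ... + t_K u^K) satisfies the same
   functional equation up to O(u^(K+1)): comparing coefficients, this is the defining system
   of the t_j together with an identity for the lambda_j, which follows from
   (2 G(1,s) - G(1/2,s) - G(3/2,s)) (1 + e^(s/2)) = s (e^(s/2) - e^s) for the Bernoulli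
   generating function G(x,s) = s e^(xs) / (e^s - 1).  Finally phi_n = f_n - S(1/n) is the
   alternating sum of the O(n^-(K+1)) defects phi_n + phi_(n+1), hence phi_n = O(n^-K). *)

Fixpoint sum_below (f : nat -> R) (q : nat) : R :=
  match q with O => 0 | S q' => sum_below f q' + f q' end.

Lemma sum_below_ext f g q :
  (forall i, (i < q)%nat -> f i = g i) -> sum_below f q = sum_below g q.
Proof.
  induction q as [|q IH]; intros H; simpl; [reflexivity|].
  rewrite IH, H by first [lia | intros; apply H; lia]. reflexivity.
Qed.

Lemma sum_below_plus f g q :
  sum_below (fun i => f i + g i) q = sum_below f q + sum_below g q.
Proof. induction q as [|q IH]; simpl; [|rewrite IH]; lra. Qed.

Lemma sum_below_scal k f q : sum_below (fun i => k * f i) q = k * sum_below f q.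
Proof. induction q as [|q IH]; simpl; [|rewrite IH]; lra. Qed.

Lemma sum_below_shift f q : sum_below f (S q) = f O + sum_below (fun i => f (S i)) q.
Proof.
  induction q as [|q IH]; [simpl; lra|].
  change (sum_below f (S (S q))) with (sum_below f (S q) + f (S q)).
  rewrite IH. simpl. lra.
Qed.

Lemma sum_below_zero f q : (forall i, (i < q)%nat -> f i = 0) -> sum_below f q = 0.
Proof.
  induction q as [|q IH]; intros H; simpl; [reflexivity|].
  rewrite IH, H by first [lia | intros; apply H; lia]. lra.
Qed.

Lemma sum_below_le f g q :
  (forall i, (i < q)%nat -> f i <= g i) -> sum_below f q <= sum_below g q.
Proof.
  induction q as [|q IH]; intros H; simpl; [lra|].
  apply Rplus_le_compat; [apply IH; intros; apply H|apply H]; lia.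
Qed.

Lemma sum_below_abs f q : Rabs (sum_below f q) <= sum_below (fun i => Rabs (f i)) q.
Proof.
  induction q as [|q IH]; simpl; [rewrite Rabs_R0; lra|].
  eapply Rle_trans; [apply Rabs_triang|lra].
Qed.

Lemma sum_below_nonneg f q : (forall i, 0 <= f i) -> 0 <= sum_below f q.
Proof.
  intros H. rewrite <- (sum_below_zero (fun _ => 0) q) by reflexivity.
  apply sum_below_le. auto.
Qed.

Lemma sum_below_ge_term f q i :
  (forall i, 0 <= f i) -> (i < q)%nat -> f i <= sum_below f q.
Proof.
  intros H. induction q as [|q IH]; intros Hi; [lia|]. simpl.
  destruct (Nat.eq_dec i q) as [->|Hne].
  - pose proof (sum_below_nonneg f q H). lra.
  - pose proof (H q). assert (f i <= sum_below f q) by (apply IH; lia). lra.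
Qed.

Lemma sum_below_trunc f q r :
  (q <= r)%nat -> (forall i, (q <= i < r)%nat -> f i = 0) -> sum_below f r = sum_below f q.
Proof.
  induction r as [|r IH]; intros Hq H; [replace q with O by lia; reflexivity|].
  destruct (Nat.eq_dec q (S r)) as [->|Hn]; [reflexivity|].
  simpl. rewrite H, IH by (lia || (intros; apply H; lia)). ring.
Qed.

Lemma sum_n_sum_below (f : nat -> R) N : sum_n f N = sum_below f (S N).
Proof.
  induction N as [|N IH]; [rewrite sum_O; simpl; ring|].
  rewrite sum_Sn, IH. reflexivity.
Qed.

Lemma sum_n_m_sum_below (f : nat -> R) m : sum_n_m f 1 m = sum_below (fun j => f (S j)) m.
Proof.
  induction m as [|m IH]; [rewrite sum_n_m_zero by lia; reflexivity|].
  rewrite sum_n_Sm, IH by lia. reflexivity.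
Qed.

Definition polyval (c : nat -> R) (p : nat) (u : R) : R := sum_below (fun m => c m * u ^ m) p.

Lemma polyval_S c p u : polyval c (S p) u = c O + u * polyval (fun i => c (S i)) p u.
Proof.
  unfold polyval. rewrite sum_below_shift, <- sum_below_scal. simpl.
  rewrite Rmult_1_r. f_equal. apply sum_below_ext. intros. ring.
Qed.

Lemma polyval_at0 c q : polyval c (S q) 0 = c O.
Proof. rewrite polyval_S. ring. Qed.

Lemma polyval_scale c q a u : polyval c q (a * u) = polyval (fun m => c m * a ^ m) q u.
Proof. apply sum_below_ext. intros. rewrite Rpow_mult_distr. ring. Qed.

Lemma polyval_bound c q u :
  0 < u <= 1 -> Rabs (polyval c q u) <= sum_below (fun i => Rabs (c i)) q.
Proof.
  intros Hu. eapply Rle_trans; [apply sum_below_abs|]. apply sum_below_le. intros i _.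
  rewrite Rabs_mult, <- RPow_abs, (Rabs_pos_eq u) by lra.
  rewrite <- (Rmult_1_r (Rabs (c i))) at 2.
  apply Rmult_le_compat_l; [apply Rabs_pos|]. rewrite <- (pow1 i). apply pow_incr. lra.
Qed.

Definition conv (c d : nat -> R) (m : nat) : R :=
  sum_below (fun i => c i * d (m - i)%nat) (S m).

Lemma conv_0 c d : conv c d O = c O * d O.
Proof. unfold conv. simpl. ring. Qed.

Lemma conv_S c d m : conv c d (S m) = c (S m) * d O + conv c (fun i => d (S i)) m.
Proof.
  unfold conv. change (sum_below (fun i => c i * d (S m - i)%nat) (S (S m)))
    with (sum_below (fun i => c i * d (S m - i)%nat) (S m) + c (S m) * d (S m - S m)%nat).
  rewrite Nat.sub_diag, Rplus_comm. f_equal. apply sum_below_ext. intros i Hi.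
  replace (S m - i)%nat with (S (m - i)) by lia. reflexivity.
Qed.

Definition trunc (c : nat -> R) (q m : nat) : R := if (m <? q)%nat then c m else 0.

(** * Asymptotic expansions at 0 *)

(* [expansion h c p] says h u = c_0 + c_1 u + ... + c_(p-1) u^(p-1) + O(u^p) for
   u in (0, 1/2].  It is stated recursively (subtract c_0, divide by u) because
   products are then handled by a plain induction; [expansion_iff] gives the
   explicit remainder bound. *)
Fixpoint expansion (h : R -> R) (c : nat -> R) (p : nat) : Prop :=
  match p with
  | O => exists C, forall u, 0 < u <= 1/2 -> Rabs (h u) <= C
  | S q => expansion (fun u => (h u - c O) / u) (fun i => c (S i)) q
  end.

Lemma expansion_ext p : forall h1 h2 c1 c2, expansion h1 c1 p ->
  (forall u, 0 < u <= 1/2 -> h1 u = h2 u) ->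
  (forall i, (i < p)%nat -> c1 i = c2 i) -> expansion h2 c2 p.
Proof.
  induction p as [|p IH]; simpl; intros h1 h2 c1 c2 H Hh Hc.
  - destruct H as [C HC]. exists C. intros u Hu. rewrite <- Hh by exact Hu. auto.
  - apply (IH _ _ _ _ H).
    + intros u Hu. rewrite Hh, Hc by (auto; lia). reflexivity.
    + intros i Hi. apply Hc. lia.
Qed.

Lemma expansion_zero p : expansion (fun _ => 0) (fun _ => 0) p.
Proof.
  induction p as [|p IH]; simpl.
  - exists 0. intros. rewrite Rabs_R0. lra.
  - apply (expansion_ext _ _ _ _ _ IH); [intros u Hu; field; lra|auto].
Qed.

Lemma expansion_plus p : forall h g c d, expansion h c p -> expansion g d p ->
  expansion (fun u => h u + g u) (fun i => c i + d i) p.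
Proof.
  induction p as [|p IH]; simpl; intros h g c d H1 H2.
  - destruct H1 as [C1 H1], H2 as [C2 H2]. exists (C1 + C2). intros u Hu.
    eapply Rle_trans; [apply Rabs_triang|]. specialize (H1 u Hu). specialize (H2 u Hu). lra.
  - apply (expansion_ext _ _ _ _ _ (IH _ _ _ _ H1 H2)); [intros u Hu; field; lra|auto].
Qed.

Lemma expansion_scal p : forall k h c, expansion h c p ->
  expansion (fun u => k * h u) (fun i => k * c i) p.
Proof.
  induction p as [|p IH]; simpl; intros k h c H.
  - destruct H as [C HC]. exists (Rabs k * C). intros u Hu. rewrite Rabs_mult.
    apply Rmult_le_compat_l; [apply Rabs_pos|auto].
  - apply (expansion_ext _ _ _ _ _ (IH k _ _ H)); [intros u Hu; field; lra|auto].
Qed.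

Lemma expansion_pred p : forall h c, expansion h c (S p) -> expansion h c p.
Proof.
  induction p as [|p IH]; intros h c H; [|apply IH; exact H].
  simpl in *. destruct H as [C HC]. exists (Rabs (c O) + C). intros u Hu.
  assert (HC0 : 0 <= C) by (pose proof (HC (1/2) ltac:(lra)) as H;
    pose proof (Rabs_pos ((h (1/2) - c O) / (1/2))); lra).
  replace (h u) with (c O + u * ((h u - c O) / u)) by (field; lra).
  eapply Rle_trans; [apply Rabs_triang|]. rewrite Rabs_mult, (Rabs_pos_eq u) by lra.
  specialize (HC u Hu). assert (u * Rabs ((h u - c O) / u) <= 1 * C).
  { apply Rmult_le_compat; try lra. apply Rabs_pos. }
  lra.
Qed.

Lemma expansion_le q p h c : (q <= p)%nat -> expansion h c p -> expansion h c q.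
Proof.
  induction 1 as [|p _ IH]; auto. intros H. apply IH, expansion_pred, H.
Qed.

Lemma expansion_mult p : forall h g c d, expansion h c p -> expansion g d p ->
  expansion (fun u => h u * g u) (conv c d) p.
Proof.
  induction p as [|p IH]; intros h g c d H1 H2.
  - simpl in *. destruct H1 as [C1 H1], H2 as [C2 H2]. exists (C1 * C2). intros u Hu.
    rewrite Rabs_mult. apply Rmult_le_compat; try apply Rabs_pos; auto.
  - assert (Hh : expansion h c p) by (apply expansion_pred; exact H1).
    simpl in H1, H2 |- *.
    (* (h g - h_0 g_0)/u = h (g - g_0)/u + g_0 (h - h_0)/u *)
    pose proof (expansion_plus p _ _ _ _ (IH _ _ _ _ Hh H2)
                  (expansion_scal p (d O) _ _ H1)) as H.
    apply (expansion_ext _ _ _ _ _ H).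
    + intros u Hu. rewrite conv_0. field. lra.
    + intros i _. rewrite conv_S. ring.
Qed.

Lemma expansion_iff p : forall h c, expansion h c p <->
  exists C, forall u, 0 < u <= 1/2 -> Rabs (h u - polyval c p u) <= C * u ^ p.
Proof.
  induction p as [|p IH]; intros h c; simpl.
  - unfold polyval. simpl.
    split; intros [C HC]; exists C; intros u Hu; specialize (HC u Hu);
      rewrite ?Rminus_0_r, ?Rmult_1_r in *; auto.
  - rewrite IH. split; intros [C HC]; exists C; intros u Hu; specialize (HC u Hu);
      rewrite polyval_S in *;
      replace (h u - (c O + u * polyval (fun i => c (S i)) p u))
        with (u * ((h u - c O) / u - polyval (fun i => c (S i)) p u)) in * by (field; lra);
      rewrite Rabs_mult, (Rabs_pos_eq u) in * by lra.
    + replace (C * (u * u ^ p)) with (u * (C * u ^ p)) by ring.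
      apply Rmult_le_compat_l; lra.
    + apply Rmult_le_reg_l with u; [lra|]. lra.
Qed.

Lemma eq_of_dist_le_linear a b K :
  (forall u, 0 < u <= 1/2 -> Rabs (a - b) <= K * u) -> a = b.
Proof.
  intros H. apply Rminus_diag_uniq.
  destruct (Req_dec (a - b) 0) as [|Hne]; [assumption|exfalso].
  pose proof (Rabs_pos_lt _ Hne) as Hpos. pose proof (Rabs_pos K).
  set (e := Rabs (a - b)) in *.
  set (u := Rmin (1/2) (e / (2 * (Rabs K + 1)))).
  assert (Hu1 : u <= e / (2 * (Rabs K + 1))) by apply Rmin_r.
  assert (Hu0 : 0 < u) by (apply Rmin_glb_lt; [lra|apply Rdiv_lt_0_compat; lra]).
  assert (He : e <= K * u) by (apply H; split; [lra|apply Rmin_l]).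
  assert (K * u <= (Rabs K + 1) * u) by (pose proof (RRle_abs K); nra).
  assert ((Rabs K + 1) * u <= e / 2).
  { apply Rle_trans with ((Rabs K + 1) * (e / (2 * (Rabs K + 1)))).
    - apply Rmult_le_compat_l; lra.
    - right. field. lra. }
  lra.
Qed.

Lemma expansion_unique p : forall h c d, expansion h c p -> expansion h d p ->
  forall i, (i < p)%nat -> c i = d i.
Proof.
  induction p as [|p IH]; intros h c d H1 H2 i Hi; [lia|].
  assert (E0 : c O = d O).
  { apply (expansion_le 1), expansion_iff in H1, H2; try lia.
    destruct H1 as [C1 H1], H2 as [C2 H2].
    apply (eq_of_dist_le_linear _ _ (C1 + C2)). intros u Hu.
    specialize (H1 u Hu). specialize (H2 u Hu). unfold polyval in *. simpl in *.
    replace (c O - d O) with (- (h u - (0 + c O * 1)) + (h u - (0 + d O * 1))) by ring.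
    eapply Rle_trans; [apply Rabs_triang|]. rewrite Rabs_Ropp. lra. }
  destruct i as [|i]; [exact E0|].
  simpl in H1, H2. rewrite <- E0 in H2. apply (IH _ _ _ H1 H2). lia.
Qed.

Definition coef_const (k : R) (i : nat) : R := match i with O => k | S _ => 0 end.

Lemma expansion_const k p : expansion (fun _ => k) (coef_const k) p.
Proof.
  destruct p as [|p]; simpl; [exists (Rabs k); intros; lra|].
  apply (expansion_ext _ _ _ _ _ (expansion_zero p)); [intros u Hu; field; lra|auto].
Qed.

Definition coef_id (i : nat) : R := match i with 1%nat => 1 | _ => 0 end.

Lemma expansion_id p : expansion (fun u => u) coef_id p.
Proof.
  destruct p as [|p]; simpl.
  - exists 1. intros u Hu. rewrite Rabs_pos_eq; lra.
  - apply (expansion_ext _ _ _ _ _ (expansion_const 1 p)); [intros u Hu; field; lra|].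
    intros [|i] _; reflexivity.
Qed.

Lemma conv_coef_id_0 c : conv coef_id c O = 0.
Proof. rewrite conv_0. simpl. ring. Qed.

Lemma conv_coef_id_S m : forall c, conv coef_id c (S m) = c m.
Proof.
  induction m as [|m IH]; intros c; rewrite conv_S; [rewrite conv_0|rewrite IH]; simpl; ring.
Qed.

Lemma expansion_polyval p : forall c q, expansion (polyval c q) (trunc c q) p.
Proof.
  induction p as [|p IH]; intros c q.
  - exists (sum_below (fun i => Rabs (c i)) q). intros u Hu. apply polyval_bound. lra.
  - destruct q as [|q].
    + apply (expansion_ext _ _ _ _ _ (expansion_zero (S p))); [reflexivity|].
      intros [|i] _; reflexivity.
    + simpl. apply (expansion_ext _ _ _ _ _ (IH (fun i => c (S i)) q)); [|reflexivity].
      intros u Hu. rewrite polyval_S. unfold trunc. simpl. field. lra.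
Qed.

Lemma expansion_sum p q : forall (a : nat -> R) F cF,
  (forall k, (k < q)%nat -> expansion (F k) (cF k) p) ->
  expansion (fun u => sum_below (fun k => a k * F k u) q)
            (fun m => sum_below (fun k => a k * cF k m) q) p.
Proof.
  induction q as [|q IH]; intros a F cF H; simpl; [apply expansion_zero|].
  apply expansion_plus; [apply IH; intros; apply H; lia|].
  apply expansion_scal, H. lia.
Qed.

Lemma expansion_geom p : expansion (fun u => / (1 + u)) (fun i => (-1) ^ i) p.
Proof.
  induction p as [|p IH]; simpl.
  - exists 1. intros u Hu. rewrite Rabs_pos_eq by (apply Rlt_le, Rinv_0_lt_compat; lra).
    rewrite <- Rinv_1. apply Rinv_le_contravar; lra.
  - apply (expansion_ext _ _ _ _ _ (expansion_scal p (-1) _ _ IH));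
      [intros u Hu; field; lra|intros; simpl; ring].
Qed.

Definition next_inv (u : R) : R := u / (1 + u).

Lemma next_inv_INR n : (1 <= n)%nat -> next_inv (/ INR n) = / INR (S n).
Proof.
  intros Hn. assert (1 <= INR n) by (apply (le_INR 1 n); lia).
  unfold next_inv. rewrite S_INR. field. lra.
Qed.

Lemma next_inv_bounds u : 0 < u <= 1/2 -> 0 < next_inv u <= 1/2 /\ next_inv u <= u.
Proof.
  intros Hu. unfold next_inv. split; [split|].
  - apply Rdiv_lt_0_compat; lra.
  - apply Rmult_le_reg_r with (1 + u); [lra|]. field_simplify; lra.
  - apply Rmult_le_reg_r with (1 + u); [lra|]. field_simplify; nra.
Qed.

Definition coef_next_inv (i : nat) : R := match i with O => 0 | S j => (-1) ^ j end.

Lemma expansion_next_inv p : expansion next_inv coef_next_inv p.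
Proof.
  destruct p as [|p]; simpl.
  - exists 1. intros u Hu. destruct (next_inv_bounds u Hu) as [[H0 H1] _].
    rewrite Rabs_pos_eq; lra.
  - apply (expansion_ext _ _ _ _ _ (expansion_geom p)); [|auto].
    intros u Hu. unfold next_inv. field. lra.
Qed.

Definition coef_next_inv_pow (k m : nat) : R :=
  match k with
  | O => coef_const 1 m
  | S k' => if (k <=? m)%nat then (-1) ^ (m - k) * Binomial.C (m - 1) k' else 0
  end.

Lemma conv_coef_next_inv_S c m : conv coef_next_inv c (S m) = c m - conv coef_next_inv c m.
Proof.
  revert c. induction m as [|m IH]; intros c.
  - unfold conv. simpl. ring.
  - rewrite conv_S, IH, (conv_S _ c m). simpl. ring.
Qed.

Lemma coef_next_inv_pow_S k m :
  coef_next_inv_pow (S k) (S m) = coef_next_inv_pow k m - coef_next_inv_pow (S k) m.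
Proof.
  destruct k as [|k]; unfold coef_next_inv_pow.
  - destruct m as [|m]; simpl; rewrite ?Nat.sub_0_r, ?C_n_0; ring.
  - destruct (Compare_dec.lt_eq_lt_dec (S k) m) as [[Hlt|<-]|Hgt].
    + destruct (Nat.le_exists_sub (S (S k)) m ltac:(lia)) as [d [-> _]].
      rewrite !(proj2 (Nat.leb_le _ _)) by lia.
      replace (S (d + S (S k)) - S (S k))%nat with (S d) by lia.
      replace (d + S (S k) - S k)%nat with (S d) by lia.
      replace (d + S (S k) - S (S k))%nat with d by lia.
      replace (d + S (S k) - 1)%nat with (S k + d)%nat by lia.
      replace (S (d + S (S k)) - 1)%nat with (S (S k + d)) by lia.
      rewrite <- (pascal (S k + d) k) by lia. simpl. ring.
    + rewrite !Nat.leb_refl, (proj2 (Nat.leb_gt (S (S k)) (S k))) by lia.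
      rewrite !Nat.sub_diag. replace (S k - 1)%nat with k by lia.
      replace (S (S k) - 1)%nat with (S k) by lia. rewrite !C_n_n. simpl. ring.
    + rewrite !(proj2 (Nat.leb_gt _ _)) by lia. ring.
Qed.

Lemma conv_coef_next_inv_pow k m :
  conv coef_next_inv (coef_next_inv_pow k) m = coef_next_inv_pow (S k) m.
Proof.
  induction m as [|m IH].
  - rewrite conv_0. simpl. ring.
  - rewrite conv_coef_next_inv_S, IH, coef_next_inv_pow_S. reflexivity.
Qed.

Lemma expansion_next_inv_pow p k :
  expansion (fun u => next_inv u ^ k) (coef_next_inv_pow k) p.
Proof.
  induction k as [|k IH]; simpl.
  - apply expansion_const.
  - apply (expansion_ext _ _ _ _ _ (expansion_mult _ _ _ _ _ (expansion_next_inv p) IH));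
      [reflexivity|intros; apply conv_coef_next_inv_pow].
Qed.

Definition coef_ln (m : nat) : R := match m with O => 0 | S j => (-1) ^ j / INR (S j) end.

Lemma polyval_derive c p y :
  is_derive (polyval c (S p)) y (polyval (fun j => INR (S j) * c (S j)) p y).
Proof.
  induction p as [|p IH].
  - apply (is_derive_ext (fun _ => c O)); [intros; unfold polyval; simpl; ring|].
    unfold polyval. simpl. auto_derive; auto.
  - apply (is_derive_ext (fun y => polyval c (S p) y + c (S p) * y ^ S p)); [reflexivity|].
    replace (polyval (fun j => INR (S j) * c (S j)) (S p) y)
      with (polyval (fun j => INR (S j) * c (S j)) p y + c (S p) * (INR (S p) * y ^ p))
      by (unfold polyval; simpl; ring).
    apply (is_derive_plus (polyval c (S p))); [exact IH|].
    apply is_derive_scal, is_derive_Reals, derivable_pt_lim_pow.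
Qed.

Lemma polyval_geom p y : 1 + y <> 0 ->
  polyval (fun j => (-1) ^ j) p y = (1 - (- y) ^ p) / (1 + y).
Proof.
  intros Hy. induction p as [|p IH]; unfold polyval in *; simpl; [field; auto|].
  rewrite IH. replace ((- y) ^ p) with ((-1) ^ p * y ^ p)
    by (rewrite <- Rpow_mult_distr; f_equal; ring).
  simpl. field. auto.
Qed.

Lemma ln_remainder_derive p y : -1 < y ->
  is_derive (fun y => ln (1 + y) - polyval coef_ln (S p) y) y ((- y) ^ p / (1 + y)).
Proof.
  intros Hy.
  replace ((- y) ^ p / (1 + y))
    with (/ (1 + y) - polyval (fun j => INR (S j) * coef_ln (S j)) p y).
  - apply (is_derive_minus (fun y => ln (1 + y))); [|apply polyval_derive].
    auto_derive; [lra|field; lra].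
  - unfold polyval. rewrite (sum_below_ext _ (fun m => (-1) ^ m * y ^ m))
      by (intros i _; unfold coef_ln; field; apply not_0_INR; lia).
    fold (polyval (fun j => (-1) ^ j) p y). rewrite polyval_geom by lra. field. lra.
Qed.

Lemma ln_taylor p x : 0 <= x -> Rabs (ln (1 + x) - polyval coef_ln (S p) x) <= x ^ S p.
Proof.
  intros Hx. set (r := fun y => ln (1 + y) - polyval coef_ln (S p) y).
  assert (Hr0 : r 0 = 0) by (unfold r; rewrite polyval_at0, Rplus_0_r, ln_1; simpl; ring).
  destruct (Req_dec x 0) as [->|Hx0]; [fold (r 0); rewrite Hr0, Rabs_R0; simpl; lra|].
  destruct (MVT_gen r 0 x (fun y => (- y) ^ p / (1 + y))) as [c [Hc Heq]].
  - intros y Hy. rewrite Rmin_left, Rmax_right in Hy by lra. apply ln_remainder_derive. lra.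
  - intros y Hy. rewrite Rmin_left, Rmax_right in Hy by lra.
    apply derivable_continuous_pt. eexists. apply is_derive_Reals, ln_remainder_derive. lra.
  - rewrite Rmin_left, Rmax_right in Hc by lra. fold (r x).
    rewrite Hr0, !Rminus_0_r in Heq. rewrite Heq.
    unfold Rdiv. rewrite !Rabs_mult, <- RPow_abs, Rabs_Ropp, (Rabs_pos_eq c), (Rabs_pos_eq x),
      (Rabs_pos_eq (/ (1 + c))) by (try apply Rlt_le, Rinv_0_lt_compat; lra).
    assert (c ^ p <= x ^ p) by (apply pow_incr; lra).
    assert (/ (1 + c) <= 1) by (rewrite <- Rinv_1; apply Rinv_le_contravar; lra).
    assert (0 <= c ^ p) by (apply pow_le; lra).
    assert (0 < / (1 + c)) by (apply Rinv_0_lt_compat; lra).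
    simpl. rewrite (Rmult_comm x). apply Rmult_le_compat_r; [lra|]. nra.
Qed.

Lemma expansion_ln a p : 0 < a ->
  expansion (fun u => ln (1 + a * u)) (fun m => coef_ln m * a ^ m) p.
Proof.
  intros Ha. apply (expansion_le p (S p)); [lia|].
  apply expansion_iff. exists (a ^ S p). intros u Hu.
  rewrite <- polyval_scale, <- Rpow_mult_distr. apply ln_taylor. nra.
Qed.

Lemma ln_1_plus_bounds u : 0 <= u -> 0 <= ln (1 + u) <= u.
Proof.
  intros Hu. split.
  - rewrite <- ln_1. apply ln_le; lra.
  - rewrite <- (ln_exp u) at 2. apply ln_le; [lra|apply exp_ineq1_le].
Qed.

Lemma bounded_of_is_lim_seq_0 (b : nat -> R) : is_lim_seq b 0 -> exists K, forall m, Rabs (b m) <= K.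
Proof.
  intros Hb. apply is_lim_seq_spec in Hb. destruct (Hb (mkposreal 1 Rlt_0_1)) as [N HN].
  exists (1 + sum_below (fun m => Rabs (b m)) N). intros m.
  pose proof (sum_below_nonneg (fun m => Rabs (b m)) N (fun i => Rabs_pos _)).
  destruct (Nat.lt_ge_cases m N) as [Hm|Hm].
  - pose proof (sum_below_ge_term (fun m => Rabs (b m)) N m (fun i => Rabs_pos _) Hm). lra.
  - specialize (HN m Hm). simpl in HN. rewrite Rminus_0_r in HN. lra.
Qed.

Lemma power_series_bounded (a : nat -> R) (F : R -> R) :
  (forall s, 0 < s < 1 -> is_series (fun m => a m * s ^ m) (F s)) ->
  exists K, forall s, 0 < s <= 1/2 -> Rabs (F s) <= K.
Proof.
  intros H.
  destruct (bounded_of_is_lim_seq_0 (fun m => a m * (3/4) ^ m)) as [K HK].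
  { apply ex_series_lim_0. eexists. apply H. lra. }
  exists (K * 3). intros s Hs.
  (* compare with the convergent series at 3/4: |a_m s^m| <= K (2/3)^m *)
  assert (Hc : forall m, Rabs (a m * s ^ m) <= K * (2/3) ^ m).
  { intros m. replace (a m * s ^ m) with (a m * (3/4) ^ m * (4/3 * s) ^ m)
      by (rewrite Rmult_assoc, <- Rpow_mult_distr; do 2 f_equal; field).
    rewrite Rabs_mult. apply Rmult_le_compat; try apply Rabs_pos; auto.
    rewrite <- RPow_abs. apply pow_incr. rewrite Rabs_pos_eq; lra. }
  assert (Hg : is_series (fun m => K * (2/3) ^ m) (K * 3)).
  { replace (K * 3) with (K * / (1 - 2/3)) by field.
    exact (is_series_scal K _ _ (is_series_geom (2/3) ltac:(rewrite Rabs_pos_eq; lra))). }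
  assert (Hex : ex_series (fun m => Rabs (a m * s ^ m))).
  { apply (@ex_series_le R_AbsRing R_CompleteNormedModule _ (fun m => K * (2/3) ^ m));
      [|eexists; exact Hg].
    intros m. change (Rabs (Rabs (a m * s ^ m)) <= K * (2/3) ^ m). rewrite Rabs_Rabsolu. auto. }
  replace (F s) with (Series (fun m => a m * s ^ m)) by (apply is_series_unique, H; lra).
  eapply Rle_trans; [apply Series_Rabs, Hex|].
  rewrite <- (is_series_unique _ _ Hg). apply Series_le; [|eexists; exact Hg].
  intros m. split; [apply Rabs_pos|auto].
Qed.

Lemma expansion_power_series p : forall (a : nat -> R) (F : R -> R),
  (forall s, 0 < s < 1 -> is_series (fun m => a m * s ^ m) (F s)) -> expansion F a p.
Proof.
  induction p as [|p IH]; intros a F H; [exact (power_series_bounded a F H)|].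
  simpl. apply IH. intros s Hs.
  assert (H1 : is_series (fun k => a (S k) * s ^ S k) (F s - a O)).
  { apply (is_series_incr_1 (fun m => a m * s ^ m)).
    match goal with |- is_series _ ?l => replace l with (F s) end; [apply H; lra|].
    change (F s = F s - a O + a O * 1). ring. }
  apply (is_series_scal (/ s)) in H1.
  replace ((F s - a O) / s) with (/ s * (F s - a O)) by (field; lra).
  eapply is_series_ext; [|exact H1]. intros n.
  change (/ s * (a (S n) * s ^ S n) = a (S n) * s ^ n). simpl. field. lra.
Qed.

Definition coef_exp (a : R) (m : nat) : R := a ^ m / INR (Factorial.fact m).

Lemma expansion_exp a p : expansion (fun s => exp (a * s)) (coef_exp a) p.
Proof.
  apply expansion_power_series. intros s _. pose proof (is_exp_Reals (a * s)) as He.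
  eapply is_series_ext; [|exact He]. intros n.
  rewrite pow_n_pow. change ((a * s) ^ n * / INR (Factorial.fact n) = coef_exp a n * s ^ n).
  unfold coef_exp. rewrite Rpow_mult_distr. field. apply INR_fact_neq_0.
Qed.

Definition bernoulli_gen (x s : R) : R := s * exp (x * s) / (exp s - 1).

Lemma expansion_bernoulli_gen B x p : is_bernoulli_polys B ->
  expansion (bernoulli_gen x) (fun m => B m x / INR (Factorial.fact m)) p.
Proof.
  intros HB. apply expansion_power_series. intros s Hs.
  eapply is_series_ext; [|apply (HB x s); [lra|rewrite Rabs_pos_eq; lra]].
  intros n. simpl. field. apply INR_fact_neq_0.
Qed.

(** * The Bernoulli identity behind the lambda_j *)

Definition coef_bernoulli_comb (B : nat -> R -> R) (m : nat) : R :=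
  (2 * B m 1 - B m (1/2) - B m (3/2)) / INR (Factorial.fact m).

Lemma bernoulli_gen_comb s : 0 < s ->
  (2 * bernoulli_gen 1 s - bernoulli_gen (1/2) s - bernoulli_gen (3/2) s) * (1 + exp (1/2 * s))
  = s * exp (1/2 * s) - s * exp (1 * s).
Proof.
  intros Hs. unfold bernoulli_gen. set (y := exp (1/2 * s)).
  assert (Hy1 : exp (1 * s) = y * y) by (unfold y; rewrite <- exp_plus; f_equal; field).
  assert (Hy2 : exp s = y * y) by (rewrite <- Hy1; f_equal; ring).
  assert (Hy3 : exp (3/2 * s) = y * y * y) by (unfold y; rewrite <- !exp_plus; f_equal; field).
  assert (Hy0 : 1 < y) by (unfold y; rewrite <- exp_0 at 1; apply exp_increasing; lra).
  rewrite Hy1, Hy2, Hy3. field. nra.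
Qed.

Lemma conv_bernoulli_comb B : is_bernoulli_polys B -> forall M,
  conv (coef_bernoulli_comb B) (fun i => coef_const 1 i + coef_exp (1/2) i) M
  = conv coef_id (fun m => coef_exp (1/2) m - coef_exp 1 m) M.
Proof.
  intros HB M.
  assert (Hl : expansion (fun s => (2 * bernoulli_gen 1 s - bernoulli_gen (1/2) s
                                   - bernoulli_gen (3/2) s) * (1 + exp (1/2 * s)))
      (conv (coef_bernoulli_comb B) (fun i => coef_const 1 i + coef_exp (1/2) i)) (S M)).
  { apply expansion_mult.
    - apply (expansion_ext _ _ _ _ _ (expansion_plus _ _ _ _ _
        (expansion_scal _ 2 _ _ (expansion_bernoulli_gen B 1 (S M) HB))
        (expansion_plus _ _ _ _ _ (expansion_scal _ (-1) _ _ (expansion_bernoulli_gen B (1/2) (S M) HB))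
                                  (expansion_scal _ (-1) _ _ (expansion_bernoulli_gen B (3/2) (S M) HB)))));
        [intros; ring|intros; unfold coef_bernoulli_comb; field; apply INR_fact_neq_0].
    - apply expansion_plus; [apply expansion_const|apply expansion_exp]. }
  assert (Hr : expansion (fun s => s * exp (1/2 * s) - s * exp (1 * s))
      (conv coef_id (fun m => coef_exp (1/2) m - coef_exp 1 m)) (S M)).
  { apply (expansion_ext _ _ _ _ _ (expansion_mult _ _ _ _ _ (expansion_id (S M))
      (expansion_plus _ _ _ _ _ (expansion_exp (1/2) (S M))
                                (expansion_scal _ (-1) _ _ (expansion_exp 1 (S M))))));
      [intros; ring|intros; apply sum_below_ext; intros; ring]. }
  apply (expansion_unique (S M) _ _ _ Hl); [|lia].
  apply (expansion_ext _ _ _ _ _ Hr); [|reflexivity].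
  intros s Hs. symmetry. apply bernoulli_gen_comb. lra.
Qed.

Lemma coef_bernoulli_comb_0_1 B : is_bernoulli_polys B ->
  coef_bernoulli_comb B 0 = 0 /\ coef_bernoulli_comb B 1 = 0.
Proof.
  intros HB. pose proof (conv_bernoulli_comb B HB O) as H0.
  pose proof (conv_bernoulli_comb B HB 1%nat) as H1.
  rewrite conv_coef_id_0, conv_0 in H0. rewrite conv_coef_id_S, conv_S, conv_0 in H1.
  unfold coef_exp in *. simpl in *. split; lra.
Qed.

Lemma lambda_bernoulli_comb B k : (1 <= k)%nat ->
  lambda B k = (-1) ^ k * 2 ^ k * INR (Factorial.fact (k - 1)) * coef_bernoulli_comb B (S k).
Proof.
  intros Hk. destruct k as [|k]; [lia|]. unfold lambda, coef_bernoulli_comb.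
  replace (S k - 1)%nat with k by lia.
  rewrite !(fact_simpl (S k)), (fact_simpl k), !mult_INR.
  pose proof (INR_fact_neq_0 k). pose proof (pos_INR k). rewrite !S_INR.
  field. repeat split; lra.
Qed.

Lemma lambda_identity_term B m k : (1 <= k <= m)%nat ->
  (-1) ^ m * 2 ^ m * INR (Factorial.fact (m - 1)) * coef_bernoulli_comb B (S k)
    * (coef_const 1 (m - k) + coef_exp (1/2) (m - k))
  = lambda B k * coef_next_inv_pow k m + (if (k =? m)%nat then lambda B m else 0).
Proof.
  intros Hkm. rewrite !lambda_bernoulli_comb by lia.
  destruct k as [|k]; [lia|].
  destruct (Nat.le_exists_sub (S k) m ltac:(lia)) as [d [-> _]].
  unfold coef_next_inv_pow. rewrite (proj2 (Nat.leb_le _ _)) by lia.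
  replace (d + S k - S k)%nat with d by lia.
  replace (d + S k - 1)%nat with (k + d)%nat by lia. replace (S k - 1)%nat with k by lia.
  destruct d as [|d].
  - rewrite Nat.eqb_refl, Nat.add_0_r. unfold coef_exp. simpl. rewrite C_n_n. field.
  - rewrite (proj2 (Nat.eqb_neq _ _)) by lia.
    unfold Binomial.C, coef_exp. replace (k + S d - k)%nat with (S d) by lia.
    rewrite !pow_add. pose proof (INR_fact_neq_0 k). pose proof (INR_fact_neq_0 (S d)).
    replace ((1/2) ^ S d) with (/ 2 ^ S d) by (rewrite <- pow_inv; f_equal; field).
    simpl coef_const. field. split; [|split]; auto. apply pow_nonzero. lra.
Qed.

Lemma sum_below_indicator m v : sum_below (fun k => if (k =? m)%nat then v else 0) (S m) = v.
Proof.
  simpl. rewrite Nat.eqb_refl, sum_below_zero; [ring|].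
  intros i Hi. rewrite (proj2 (Nat.eqb_neq _ _)) by lia. reflexivity.
Qed.

(* Coefficientwise form of Lambda(u) + Lambda(u/(1+u)) = ln(1+2u) - ln(1+u) for the
   generating function Lambda of the lambda_j; it is the Bernoulli identity
   [conv_bernoulli_comb] in disguise. *)
Lemma lambda_identity B m : is_bernoulli_polys B -> (1 <= m)%nat ->
  lambda B m + sum_below (fun k => lambda B k * coef_next_inv_pow k m) (S m)
  = coef_ln m * 2 ^ m - coef_ln m.
Proof.
  intros HB Hm. destruct (coef_bernoulli_comb_0_1 B HB) as [D0 D1].
  set (Q := (-1) ^ m * 2 ^ m * INR (Factorial.fact (m - 1))).
  transitivity (Q * conv (coef_bernoulli_comb B) (fun i => coef_const 1 i + coef_exp (1/2) i) (S m)).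
  - unfold conv. rewrite (sum_below_shift _ (S m)). cbv beta.
    rewrite D0, Rmult_0_l, Rplus_0_l, <- sum_below_scal.
    rewrite <- (sum_below_indicator m (lambda B m)) at 1.
    rewrite Rplus_comm, <- sum_below_plus. apply sum_below_ext. intros k Hk.
    replace (S m - S k)%nat with (m - k)%nat by lia.
    destruct k as [|k].
    + rewrite D1. destruct m as [|m]; [lia|]. simpl. ring.
    + rewrite <- lambda_identity_term by lia. unfold Q. ring.
  - rewrite conv_bernoulli_comb, conv_coef_id_S by exact HB.
    destruct m as [|m]; [lia|]. unfold Q, coef_exp, coef_ln.
    replace (S m - 1)%nat with m by lia. rewrite fact_simpl, mult_INR.
    pose proof (INR_fact_neq_0 m). assert (INR (S m) <> 0) by (apply not_0_INR; lia).
    replace ((1/2) ^ S m) with (/ 2 ^ S m) by (rewrite <- pow_inv; f_equal; field).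
    assert (2 ^ m <> 0) by (apply pow_nonzero; lra).
    rewrite pow1. simpl pow. field. auto.
Qed.

Lemma conv_coef_ln_t_sequence B t K : is_t_sequence B t -> forall m, (1 <= m <= K)%nat ->
  conv coef_ln (trunc t (S K)) m = lambda B m.
Proof.
  intros [_ Ht] m Hm. rewrite <- (Ht m), sum_n_m_sum_below by lia.
  unfold conv. rewrite sum_below_shift. cbv beta.
  replace (coef_ln 0) with 0 by reflexivity. rewrite Rmult_0_l, Rplus_0_l.
  apply sum_below_ext. intros i Hi. unfold trunc.
  rewrite (proj2 (Nat.ltb_lt _ _)) by lia.
  unfold coef_ln. change ((-1) ^ S (S i)) with (-1 * (-1 * (-1) ^ i)).
  field. apply not_0_INR. lia.
Qed.

(* [lambda B 0] would divide by 0, so the constant term is set explicitly. *)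
Definition coef_lambda (B : nat -> R -> R) (m : nat) : R :=
  match m with O => 0 | _ => lambda B m end.

Lemma expansion_ln_mul_t B t K : is_t_sequence B t ->
  expansion (fun u => ln (1 + u) * polyval t (S K) u) (coef_lambda B) (S K).
Proof.
  intros Ht.
  apply (expansion_ext _ _ _ _ _
    (expansion_mult _ _ _ _ _ (expansion_ln 1 (S K) Rlt_0_1) (expansion_polyval (S K) t (S K)))).
  - intros u _. rewrite Rmult_1_l. reflexivity.
  - intros [|m] Hm.
    + rewrite conv_0. simpl. ring.
    + simpl coef_lambda. rewrite <- (conv_coef_ln_t_sequence B t K Ht (S m)) by lia.
      apply sum_below_ext. intros. rewrite pow1, Rmult_1_r. reflexivity.
Qed.

Lemma expansion_lambda_functional_eq B K : is_bernoulli_polys B ->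
  expansion (fun u => polyval (coef_lambda B) (S K) u + polyval (coef_lambda B) (S K) (next_inv u)
                      - (ln (1 + 2 * u) - ln (1 + u))) (fun _ => 0) (S K).
Proof.
  intros HB.
  pose proof (expansion_plus _ _ _ _ _ (expansion_polyval (S K) (coef_lambda B) (S K))
    (expansion_plus _ _ _ _ _
      (expansion_sum (S K) (S K) (coef_lambda B) _ _ (fun k _ => expansion_next_inv_pow (S K) k))
      (expansion_plus _ _ _ _ _ (expansion_scal _ (-1) _ _ (expansion_ln 2 (S K) ltac:(lra)))
                                (expansion_scal _ 1 _ _ (expansion_ln 1 (S K) Rlt_0_1))))) as H.
  apply (expansion_ext _ _ _ _ _ H).
  - intros u _. unfold polyval. rewrite !Rmult_1_l. ring.
  - intros m Hm. unfold trunc. rewrite (proj2 (Nat.ltb_lt _ _)) by lia.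
    rewrite pow1, Rmult_1_r.
    destruct m as [|m].
    + rewrite sum_below_zero; [simpl; ring|].
      intros [|k] _; simpl; ring.
    + rewrite (sum_below_trunc _ (S (S m)) (S K)) by
        (lia || (intros i Hi; unfold coef_next_inv_pow; destruct i; [lia|];
                 rewrite (proj2 (Nat.leb_gt _ _)) by lia; ring)).
      rewrite (sum_below_ext _ (fun k => lambda B k * coef_next_inv_pow k (S m)))
        by (intros [|k] _; [simpl; ring|reflexivity]).
      pose proof (lambda_identity B (S m) HB ltac:(lia)). simpl coef_lambda. lra.
Qed.

Lemma nonneg_of_abs_le_mul_pow (f : R -> R) C p :
  (forall u, 0 < u <= 1/2 -> Rabs (f u) <= C * u ^ p) -> 0 <= C.
Proof.
  intros H. specialize (H (1/2) ltac:(lra)). pose proof (Rabs_pos (f (1/2))).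
  assert (0 < (1/2) ^ p) by (apply pow_lt; lra).
  destruct (Rle_lt_dec 0 C); [assumption|nra].
Qed.

Lemma functional_eq_remainder B t K : is_bernoulli_polys B -> is_t_sequence B t ->
  exists C, forall u, 0 < u <= 1/2 ->
    Rabs (ln (1 + u) * polyval t (S K) u + ln (1 + next_inv u) * polyval t (S K) (next_inv u)
          - (ln (1 + 2 * u) - ln (1 + u))) <= C * u ^ S K.
Proof.
  intros HB Ht.
  destruct (proj1 (expansion_iff _ _ _) (expansion_ln_mul_t B t K Ht)) as [C1 H1].
  destruct (proj1 (expansion_iff _ _ _) (expansion_lambda_functional_eq B K HB)) as [C2 H2].
  pose proof (nonneg_of_abs_le_mul_pow _ _ _ H1).
  exists (2 * C1 + C2). intros u Hu.
  destruct (next_inv_bounds u Hu) as [Hw Hwu].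
  specialize (H2 u Hu). unfold polyval at 3 in H2. rewrite sum_below_zero in H2 by (intros; ring).
  pose proof (H1 u Hu). pose proof (H1 (next_inv u) Hw).
  assert (C1 * next_inv u ^ S K <= C1 * u ^ S K) by (apply Rmult_le_compat_l, pow_incr; lra).
  set (L := polyval (coef_lambda B) (S K)) in *.
  match goal with |- Rabs ?e <= _ => replace e with
    ((ln (1 + u) * polyval t (S K) u - L u)
     + (ln (1 + next_inv u) * polyval t (S K) (next_inv u) - L (next_inv u))
     + (L u + L (next_inv u) - (ln (1 + 2 * u) - ln (1 + u)) - 0)) by ring end.
  eapply Rle_trans; [apply Rabs_triang|].
  eapply Rle_trans; [apply Rplus_le_compat_r, Rabs_triang|]. lra.
Qed.

(** * The Gamma function *)

Lemma exp_le_of_le a b : a <= b -> exp a <= exp b.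
Proof.
  intros H. destruct (Rle_lt_or_eq_dec a b H) as [Hlt | ->]; [|lra].
  apply Rlt_le, exp_increasing, Hlt.
Qed.

Lemma ex_RInt_of_continuous_pos (f : R -> R) a b :
  (forall t, 0 < t -> continuous f t) -> 0 < a -> a <= b -> ex_RInt f a b.
Proof.
  intros Hc Ha Hab. apply (@ex_RInt_continuous R_CompleteNormedModule).
  intros z Hz. apply Hc. rewrite Rmin_left in Hz by lra. lra.
Qed.

Lemma RInt_le_of_subinterval (f : R -> R) a0 b0 a b :
  (forall t, 0 < t -> continuous f t) -> (forall t, 0 < t -> 0 <= f t) ->
  0 < a -> a <= a0 -> a0 <= b0 -> b0 <= b -> RInt f a0 b0 <= RInt f a b.
Proof.
  intros Hc Hp Ha H1 H2 H3.
  rewrite <- (RInt_Chasles f a a0 b), <- (RInt_Chasles f a0 b0 b)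
    by (apply ex_RInt_of_continuous_pos; auto; lra).
  assert (0 <= RInt f a a0)
    by (apply RInt_ge_0; [lra|apply ex_RInt_of_continuous_pos; auto|intros; apply Hp]; lra).
  assert (0 <= RInt f b0 b)
    by (apply RInt_ge_0; [lra|apply ex_RInt_of_continuous_pos; auto; lra|intros; apply Hp; lra]).
  change (RInt f a0 b0 <= RInt f a a0 + (RInt f a0 b0 + RInt f b0 b)). lra.
Qed.

Lemma RInt_gen_nonneg_sup (f : R -> R) (M : R) :
  (forall t, 0 < t -> continuous f t) -> (forall t, 0 < t -> 0 <= f t) ->
  (forall a b, 0 < a <= b -> RInt f a b <= M) ->
  is_lub (fun y => exists a b, 0 < a <= b /\ y = RInt f a b)
         (RInt_gen f (at_right 0) (Rbar_locally p_infty)).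
Proof.
  intros Hc Hp HM. set (E := fun y => exists a b, 0 < a <= b /\ y = RInt f a b).
  destruct (completeness E) as [L [HL1 HL2]].
  { exists M. intros y [a [b [Hab ->]]]. auto. }
  { exists (RInt f 1 1), 1, 1. split; [lra|reflexivity]. }
  assert (Happ : forall eps, 0 < eps -> exists a b, 0 < a <= b /\ L - eps < RInt f a b).
  { intros eps Heps. apply Classical_Prop.NNPP. intros Hn.
    assert (L <= L - eps); [|lra]. apply HL2. intros y [a [b [Hab ->]]].
    destruct (Rle_lt_dec (RInt f a b) (L - eps)) as [|Hlt]; [assumption|].
    exfalso. apply Hn. exists a, b. auto. }
  replace (RInt_gen f (at_right 0) (Rbar_locally p_infty)) with L; [split; assumption|].
  symmetry. apply (is_RInt_gen_unique (Fa := at_right 0) (Fb := Rbar_locally p_infty)).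
  intros P [eps HP]. destruct (Happ eps (cond_pos eps)) as [a0 [b0 [Hab0 H0]]].
  apply Filter_prod with (fun a => 0 < a < a0) (fun b => b0 < b).
  - exists (mkposreal a0 (proj1 Hab0)). intros y Hy Hy0. split; [assumption|].
    change (Rabs (y - 0) < a0) in Hy. rewrite Rminus_0_r in Hy. apply Rabs_def2 in Hy. lra.
  - exists b0. auto.
  - intros a b Ha Hb. simpl. exists (RInt f a b). split.
    + apply (@RInt_correct R_CompleteNormedModule), ex_RInt_of_continuous_pos; auto; lra.
    + apply HP. change (Rabs (RInt f a b - L) < eps).
      assert (RInt f a b <= L) by (apply HL1; exists a, b; split; [lra|reflexivity]).
      assert (RInt f a0 b0 <= RInt f a b) by (apply RInt_le_of_subinterval; auto; lra).
      apply Rabs_def1; lra.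
Qed.

Definition gamma_integrand (x t : R) : R := Rpower t (x - 1) * exp (- t).

Lemma gamma_integrand_continuous x t : 0 < t -> continuous (gamma_integrand x) t.
Proof.
  intros Ht. apply (@ex_derive_continuous R_AbsRing R_NormedModule).
  unfold gamma_integrand, Rpower. auto_derive. lra.
Qed.

Lemma gamma_integrand_nonneg x t : 0 <= gamma_integrand x t.
Proof.
  unfold gamma_integrand, Rpower.
  apply Rmult_le_pos; apply Rlt_le, exp_pos.
Qed.

Lemma ex_RInt_gamma_integrand x a b : 0 < a -> a <= b -> ex_RInt (gamma_integrand x) a b.
Proof. apply ex_RInt_of_continuous_pos. intros. apply gamma_integrand_continuous. auto. Qed.

(* Via ln t <= 2 (sqrt t - 1) and AM-GM. *)
Lemma gamma_integrand_le x t : 1 <= x -> 0 < t ->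
  gamma_integrand x t <= exp (2 * (x - 1) ^ 2) * exp (- t / 2).
Proof.
  intros Hx Ht. unfold gamma_integrand, Rpower. rewrite <- !exp_plus. apply exp_le_of_le.
  set (s := sqrt t). assert (Hs : 0 < s) by (apply sqrt_lt_R0; lra).
  assert (Hss : s * s = t) by (apply sqrt_sqrt; lra).
  assert (Hl : ln t = ln s + ln s) by (rewrite <- Hss; apply ln_mult; lra).
  assert (Hls : 1 + ln s <= s) by (pose proof (exp_ineq1_le (ln s)) as H; rewrite exp_ln in H; lra).
  assert ((x - 1) * ln s <= (x - 1) * (s - 1)) by (apply Rmult_le_compat_l; lra).
  rewrite Hl, <- Hss. pose proof (pow2_ge_0 (x - 1 - s / 2)). nra.
Qed.

Lemma RInt_exp_half_le a b : 0 <= a -> a <= b -> RInt (fun t => exp (- t / 2)) a b <= 2.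
Proof.
  intros Ha Hab.
  assert (H : is_RInt (fun t => exp (- t / 2)) a b
                (minus (-2 * exp (- b / 2)) (-2 * exp (- a / 2)))).
  { apply (is_RInt_derive (fun t => -2 * exp (- t / 2))).
    - intros x _. auto_derive; [auto|]. unfold Rdiv. field.
    - intros x _. apply (@ex_derive_continuous R_AbsRing R_NormedModule). auto_derive. auto. }
  rewrite (is_RInt_unique _ _ _ _ H). change (-2 * exp (- b / 2) - -2 * exp (- a / 2) <= 2).
  pose proof (exp_pos (- b / 2)).
  assert (exp (- a / 2) <= 1) by (rewrite <- exp_0; apply exp_le_of_le; lra). lra.
Qed.

Lemma Gamma_is_lub x : 1 <= x ->
  is_lub (fun y => exists a b, 0 < a <= b /\ y = RInt (gamma_integrand x) a b) (Gamma x).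
Proof.
  intros Hx. apply (RInt_gen_nonneg_sup _ (exp (2 * (x - 1) ^ 2) * 2)).
  - intros. apply gamma_integrand_continuous. auto.
  - intros. apply gamma_integrand_nonneg.
  - intros a b Hab. set (K := exp (2 * (x - 1) ^ 2)).
    assert (Hd : ex_RInt (fun t => exp (- t / 2)) a b).
    { apply ex_RInt_of_continuous_pos; try lra. intros z _.
      apply (@ex_derive_continuous R_AbsRing R_NormedModule). auto_derive. auto. }
    apply Rle_trans with (RInt (fun t => K * exp (- t / 2)) a b).
    + apply RInt_le; [lra|apply ex_RInt_gamma_integrand; lra| |].
      * exact (ex_RInt_scal (V := R_NormedModule) _ a b K Hd).
      * intros t Ht. apply gamma_integrand_le; lra.
    + pose proof (RInt_scal (V := R_CompleteNormedModule) _ a b K Hd) as HS.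
      change (RInt (fun t => K * exp (- t / 2)) a b = K * RInt (fun t => exp (- t / 2)) a b) in HS.
      rewrite HS.
      apply Rmult_le_compat_l; [apply Rlt_le, exp_pos|apply RInt_exp_half_le; lra].
Qed.

Lemma RInt_le_Gamma x a b : 1 <= x -> 0 < a <= b -> RInt (gamma_integrand x) a b <= Gamma x.
Proof. intros Hx Hab. apply (proj1 (Gamma_is_lub x Hx)). exists a, b. auto. Qed.

Lemma Gamma_le_of_RInt_le x c : 1 <= x ->
  (forall a b, 0 < a <= b -> RInt (gamma_integrand x) a b <= c) -> Gamma x <= c.
Proof.
  intros Hx H. apply (proj2 (Gamma_is_lub x Hx)). intros y [a [b [Hab ->]]]. auto.
Qed.

Lemma Gamma_pos x : 1 <= x -> 0 < Gamma x.
Proof.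
  intros Hx. apply Rlt_le_trans with (RInt (gamma_integrand x) 1 2); [|apply RInt_le_Gamma; lra].
  apply Rlt_le_trans with (RInt (fun _ => exp (-2)) 1 2).
  - rewrite RInt_const. change (0 < (2 - 1) * exp (-2)). pose proof (exp_pos (-2)). lra.
  - apply RInt_le; [lra|apply ex_RInt_const|apply ex_RInt_gamma_integrand; lra|].
    intros t Ht. unfold gamma_integrand, Rpower. rewrite <- (Rmult_1_l (exp (-2))).
    assert (0 <= ln t) by (rewrite <- ln_1; apply ln_le; lra).
    assert (1 <= exp ((x - 1) * ln t)) by (rewrite <- exp_0 at 1; apply exp_le_of_le; nra).
    assert (exp (-2) <= exp (- t)) by (apply exp_le_of_le; lra).
    pose proof (exp_pos (-2)). apply Rmult_le_compat; lra.
Qed.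

Lemma RInt_lincomb f g a b p q : ex_RInt f a b -> ex_RInt g a b ->
  RInt (fun t => p * f t + q * g t) a b = p * RInt f a b + q * RInt g a b.
Proof.
  intros Hf Hg. apply is_RInt_unique.
  apply (is_RInt_plus (V := R_NormedModule)); apply (is_RInt_scal (V := R_NormedModule));
    apply (RInt_correct (V := R_CompleteNormedModule)); assumption.
Qed.

Lemma gamma_integrand_by_parts x a b : 0 < a -> a <= b ->
  RInt (gamma_integrand (x + 1)) a b
  = x * RInt (gamma_integrand x) a b + (Rpower a x * exp (- a) - Rpower b x * exp (- b)).
Proof.
  intros Ha Hab.
  assert (I : is_RInt (fun t => 1 * gamma_integrand (x + 1) t + - x * gamma_integrand x t) a b
                (minus (- (Rpower b x * exp (- b))) (- (Rpower a x * exp (- a))))).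
  { apply (is_RInt_derive (fun t => - (Rpower t x * exp (- t)))).
    - intros t Ht. rewrite Rmin_left, Rmax_right in Ht by lra.
      unfold gamma_integrand, Rpower. auto_derive; [lra|].
      replace (x + 1 - 1) with x by ring.
      replace ((x - 1) * ln t) with (x * ln t + - ln t) by ring.
      rewrite exp_plus, (exp_Ropp (ln t)), exp_ln by lra. field. lra.
    - intros t Ht. rewrite Rmin_left, Rmax_right in Ht by lra.
      apply (@ex_derive_continuous R_AbsRing R_NormedModule).
      unfold gamma_integrand, Rpower. auto_derive. lra. }
  apply (is_RInt_unique (V := R_CompleteNormedModule)) in I.
  rewrite RInt_lincomb in I by (apply ex_RInt_gamma_integrand; lra).
  change (1 * RInt (gamma_integrand (x + 1)) a b + - x * RInt (gamma_integrand x) a b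
          = - (Rpower b x * exp (- b)) - - (Rpower a x * exp (- a))) in I. lra.
Qed.

Lemma Rpower_exp_nonneg b x : 0 <= Rpower b x * exp (- b).
Proof. unfold Rpower. apply Rmult_le_pos; apply Rlt_le, exp_pos. Qed.

Lemma Gamma_succ_le x : 1 <= x -> Gamma (x + 1) <= x * Gamma x.
Proof.
  intros Hx. apply Gamma_le_of_RInt_le; [lra|]. intros a b Hab.
  apply Rle_plus_epsilon. intros eps Heps.
  (* move the lower limit down to a' <= eps, where the boundary term is at most a' *)
  set (a' := Rmin a (Rmin 1 eps)).
  assert (Ha' : 0 < a' /\ a' <= a /\ a' <= 1 /\ a' <= eps).
  { unfold a'. repeat split; try (repeat apply Rmin_glb_lt; lra).
    - apply Rmin_l.
    - eapply Rle_trans; [apply Rmin_r|apply Rmin_l].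
    - eapply Rle_trans; [apply Rmin_r|apply Rmin_r]. }
  assert (H1 : RInt (gamma_integrand (x + 1)) a b <= RInt (gamma_integrand (x + 1)) a' b)
    by (apply RInt_le_of_subinterval; auto using gamma_integrand_continuous,
          gamma_integrand_nonneg; lra).
  rewrite (gamma_integrand_by_parts x a' b) in H1 by lra.
  assert (x * RInt (gamma_integrand x) a' b <= x * Gamma x)
    by (apply Rmult_le_compat_l; [lra|apply RInt_le_Gamma; lra]).
  assert (Rpower a' x <= a').
  { unfold Rpower. rewrite <- (exp_ln a') at 2 by lra. apply exp_le_of_le.
    assert (ln a' <= 0) by (rewrite <- ln_1; apply ln_le; lra). nra. }
  assert (exp (- a') <= 1) by (rewrite <- exp_0; apply exp_le_of_le; lra).
  assert (0 <= Rpower a' x) by (unfold Rpower; apply Rlt_le, exp_pos).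
  pose proof (Rpower_exp_nonneg b x). pose proof (exp_pos (- a')).
  assert (Rpower a' x * exp (- a') <= a') by nra.
  lra.
Qed.

Lemma Gamma_succ_ge x : 1 <= x -> x * Gamma x <= Gamma (x + 1).
Proof.
  intros Hx. rewrite Rmult_comm. apply Rle_div_r; [lra|].
  apply Gamma_le_of_RInt_le; [lra|]. intros a b Hab. apply Rle_div_r; [lra|].
  rewrite Rmult_comm. apply Rle_plus_epsilon. intros eps Heps.
  (* move the upper limit up to b', where the boundary term is at most 2K/b' <= eps *)
  set (K := exp (2 * (x + 1 - 1) ^ 2)). assert (HK : 0 < K) by apply exp_pos.
  set (b' := Rmax b (2 * K / eps)).
  assert (Hb1 : b <= b') by apply Rmax_l.
  assert (Hb2 : 2 * K / eps <= b') by apply Rmax_r.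
  assert (Hb0 : 0 < b') by lra.
  assert (H1 : x * RInt (gamma_integrand x) a b <= x * RInt (gamma_integrand x) a b')
    by (apply Rmult_le_compat_l; [lra|apply RInt_le_of_subinterval;
          auto using gamma_integrand_continuous, gamma_integrand_nonneg; lra]).
  pose proof (gamma_integrand_by_parts x a b' ltac:(lra) ltac:(lra)) as H2.
  assert (RInt (gamma_integrand (x + 1)) a b' <= Gamma (x + 1)) by (apply RInt_le_Gamma; lra).
  pose proof (Rpower_exp_nonneg a x).
  assert (H5 : Rpower b' x * exp (- b') <= K * (2 / b')).
  { replace (Rpower b' x * exp (- b')) with (gamma_integrand (x + 1) b')
      by (unfold gamma_integrand; do 3 f_equal; ring).
    eapply Rle_trans; [apply gamma_integrand_le; lra|].
    apply Rmult_le_compat_l; [lra|].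
    pose proof (exp_ineq1_le (b' / 2)). pose proof (exp_pos (b' / 2)).
    replace (- b' / 2) with (- (b' / 2)) by field. rewrite exp_Ropp.
    apply Rmult_le_reg_r with (exp (b' / 2)); [lra|]. rewrite Rinv_l by lra.
    apply Rmult_le_reg_l with b'; [lra|]. field_simplify; lra. }
  assert (K * (2 / b') <= eps).
  { apply Rmult_le_reg_r with b'; [lra|]. replace (K * (2 / b') * b') with (2 * K) by (field; lra).
    apply Rmult_le_reg_r with (/ eps); [apply Rinv_0_lt_compat; lra|].
    replace (2 * K * / eps) with (2 * K / eps) by reflexivity.
    replace (eps * b' * / eps) with b' by (field; lra). lra. }
  lra.
Qed.

Lemma Gamma_succ x : 1 <= x -> Gamma (x + 1) = x * Gamma x.
Proof. intros Hx. apply Rle_antisym; [apply Gamma_succ_le|apply Gamma_succ_ge]; exact Hx. Qed.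

Lemma gamma_integrand_amgm x s t : 0 < s -> 0 < t ->
  gamma_integrand x t
  <= (s * gamma_integrand (x - 1/2) t + / s * gamma_integrand (x + 1/2) t) / 2.
Proof.
  intros Hs Ht. unfold gamma_integrand.
  set (A := Rpower t (x - 3/2)). set (w := Rpower t (1/2)). set (e := exp (- t)).
  assert (E1 : Rpower t (x - 1) = A * w) by (unfold A, w; rewrite <- Rpower_plus; f_equal; field).
  assert (E2 : Rpower t (x - 1/2 - 1) = A) by (unfold A; f_equal; field).
  assert (E3 : Rpower t (x + 1/2 - 1) = A * w * w)
    by (unfold A, w; rewrite <- !Rpower_plus; f_equal; field).
  rewrite E1, E2, E3.
  assert (HA : 0 < A) by (unfold A, Rpower; apply exp_pos).
  assert (He : 0 < e) by (unfold e; apply exp_pos).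
  assert (Hid : (s * (A * e) + / s * (A * w * w * e)) / 2 - A * w * e
                = A * e * (s - w) ^ 2 / (2 * s)) by (field; lra).
  assert (0 <= A * e * (s - w) ^ 2 / (2 * s)).
  { apply Rmult_le_pos; [apply Rmult_le_pos; [nra|apply pow2_ge_0]|].
    apply Rlt_le, Rinv_0_lt_compat. lra. }
  lra.
Qed.

Lemma Gamma_le_mean x s : 3/2 <= x -> 0 < s ->
  Gamma x <= (s * Gamma (x - 1/2) + / s * Gamma (x + 1/2)) / 2.
Proof.
  intros Hx Hs. apply Gamma_le_of_RInt_le; [lra|]. intros a b Hab.
  assert (0 < / s) by (apply Rinv_0_lt_compat; lra).
  apply Rle_trans with (RInt (fun t => (s / 2) * gamma_integrand (x - 1/2) t
                                       + (/ s / 2) * gamma_integrand (x + 1/2) t) a b).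
  - apply RInt_le; [lra|apply ex_RInt_gamma_integrand; lra| |].
    + apply (ex_RInt_plus (V := R_NormedModule)); apply (ex_RInt_scal (V := R_NormedModule));
        apply ex_RInt_gamma_integrand; lra.
    + intros t Ht. pose proof (gamma_integrand_amgm x s t Hs ltac:(lra)). lra.
  - rewrite RInt_lincomb by (apply ex_RInt_gamma_integrand; lra).
    assert (RInt (gamma_integrand (x - 1/2)) a b <= Gamma (x - 1/2)) by (apply RInt_le_Gamma; lra).
    assert (RInt (gamma_integrand (x + 1/2)) a b <= Gamma (x + 1/2)) by (apply RInt_le_Gamma; lra).
    nra.
Qed.

Lemma Gamma_sq_le x : 3/2 <= x -> Gamma x ^ 2 <= Gamma (x - 1/2) * Gamma (x + 1/2).
Proof.
  intros Hx.
  pose proof (Gamma_pos x ltac:(lra)). pose proof (Gamma_pos (x - 1/2) ltac:(lra)).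
  pose proof (Gamma_pos (x + 1/2) ltac:(lra)).
  (* the optimal choice s = Gamma x / Gamma (x - 1/2) in [Gamma_le_mean] *)
  pose proof (Gamma_le_mean x (Gamma x / Gamma (x - 1/2)) Hx ltac:(apply Rdiv_lt_0_compat; lra)) as Hmean.
  replace ((Gamma x / Gamma (x - 1/2) * Gamma (x - 1/2)
            + / (Gamma x / Gamma (x - 1/2)) * Gamma (x + 1/2)) / 2)
    with ((Gamma x + Gamma (x - 1/2) * Gamma (x + 1/2) / Gamma x) / 2) in Hmean by (field; lra).
  apply Rmult_le_reg_r with (/ Gamma x); [apply Rinv_0_lt_compat; lra|].
  replace (Gamma x ^ 2 * / Gamma x) with (Gamma x) by (field; lra). lra.
Qed.

Definition omega_ratio (n : nat) : R := Omega n ^ 2 / (Omega (n - 1) * Omega (n + 1)).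

Lemma omega_ratio_Gamma n : (1 <= n)%nat ->
  omega_ratio n = Gamma (INR n / 2 + 1/2) * Gamma (INR n / 2 + 3/2) / Gamma (INR n / 2 + 1) ^ 2.
Proof.
  intros Hn. unfold omega_ratio, Omega.
  assert (Hn' : 1 <= INR n) by (apply (le_INR 1 n); lia).
  replace (INR (n - 1) / 2 + 1) with (INR n / 2 + 1/2) by (rewrite minus_INR by lia; simpl; field).
  replace (INR (n + 1) / 2 + 1) with (INR n / 2 + 3/2) by (rewrite plus_INR; simpl; field).
  assert (E : Rpower PI (INR (n - 1) / 2) * Rpower PI (INR (n + 1) / 2) = Rpower PI (INR n / 2) ^ 2).
  { simpl. rewrite Rmult_1_r, <- !Rpower_plus. f_equal.
    rewrite minus_INR, plus_INR by lia. simpl. field. }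
  pose proof (Gamma_pos (INR n / 2 + 1/2) ltac:(lra)).
  pose proof (Gamma_pos (INR n / 2 + 3/2) ltac:(lra)).
  pose proof (Gamma_pos (INR n / 2 + 1) ltac:(lra)).
  replace ((Rpower PI (INR n / 2) / Gamma (INR n / 2 + 1)) ^ 2)
    with (Rpower PI (INR n / 2) ^ 2 / Gamma (INR n / 2 + 1) ^ 2) by (field; lra).
  rewrite <- E. field.
  repeat split; try lra; unfold Rpower; apply Rgt_not_eq, exp_pos.
Qed.

Lemma omega_ratio_ge_1 n : (1 <= n)%nat -> 1 <= omega_ratio n.
Proof.
  intros Hn. rewrite omega_ratio_Gamma by exact Hn.
  assert (1 <= INR n) by (apply (le_INR 1 n); lia).
  pose proof (Gamma_sq_le (INR n / 2 + 1) ltac:(lra)) as Hsq.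
  replace (INR n / 2 + 1 - 1/2) with (INR n / 2 + 1/2) in Hsq by field.
  replace (INR n / 2 + 1 + 1/2) with (INR n / 2 + 3/2) in Hsq by field.
  assert (0 < Gamma (INR n / 2 + 1) ^ 2) by (apply pow_lt, Gamma_pos; lra).
  apply Rmult_le_reg_r with (Gamma (INR n / 2 + 1) ^ 2); [lra|].
  unfold Rdiv. rewrite Rmult_assoc, Rinv_l; lra.
Qed.

Lemma omega_ratio_mul_succ n : (1 <= n)%nat ->
  omega_ratio n * omega_ratio (S n) = (INR n + 2) / (INR n + 1).
Proof.
  intros Hn. rewrite !omega_ratio_Gamma by lia. rewrite S_INR.
  assert (1 <= INR n) by (apply (le_INR 1 n); lia).
  replace ((INR n + 1) / 2 + 1/2) with (INR n / 2 + 1) by field.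
  replace ((INR n + 1) / 2 + 3/2) with ((INR n / 2 + 1) + 1) by field.
  replace ((INR n + 1) / 2 + 1) with ((INR n / 2 + 1/2) + 1) by field.
  replace (INR n / 2 + 3/2) with ((INR n / 2 + 1/2) + 1) by field.
  rewrite (Gamma_succ (INR n / 2 + 1/2)), (Gamma_succ (INR n / 2 + 1)) by lra.
  pose proof (Gamma_pos (INR n / 2 + 1/2) ltac:(lra)).
  pose proof (Gamma_pos (INR n / 2 + 1) ltac:(lra)).
  field. repeat split; lra.
Qed.

Lemma ln_omega_ratio_nonneg n : (1 <= n)%nat -> 0 <= ln (omega_ratio n).
Proof. intros Hn. rewrite <- ln_1. apply ln_le; [lra|apply omega_ratio_ge_1, Hn]. Qed.

Lemma ln_omega_ratio_add_succ n : (1 <= n)%nat ->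
  ln (omega_ratio n) + ln (omega_ratio (S n)) = ln (1 + 2 * / INR n) - ln (1 + / INR n).
Proof.
  intros Hn. pose proof (omega_ratio_ge_1 n Hn). pose proof (omega_ratio_ge_1 (S n) ltac:(lia)).
  assert (1 <= INR n) by (apply (le_INR 1 n); lia).
  assert (0 < / INR n) by (apply Rinv_0_lt_compat; lra).
  rewrite <- ln_mult by lra. rewrite omega_ratio_mul_succ by exact Hn. rewrite <- ln_div by lra.
  f_equal. field. lra.
Qed.

(** * From the functional equation to the asymptotics *)

Lemma alternating_sum_bound (phi h : nat -> R) n0 :
  (forall n, (n0 <= n)%nat -> phi n + phi (S n) = h n) ->
  forall j m, (n0 <= m)%nat ->
    Rabs (phi m) <= sum_below (fun k => Rabs (h (m + k)%nat)) j + Rabs (phi (m + j)%nat).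
Proof.
  intros Hrec j. induction j as [|j IH]; intros m Hm; [rewrite Nat.add_0_r; simpl; lra|].
  rewrite sum_below_shift, Nat.add_0_r.
  rewrite (sum_below_ext _ (fun i => Rabs (h (S m + i)%nat))) by (intros; rewrite Nat.add_succ_r; reflexivity).
  replace (m + S j)%nat with (S m + j)%nat by lia.
  specialize (IH (S m) ltac:(lia)).
  replace (phi m) with (h m - phi (S m)) by (rewrite <- Hrec by exact Hm; ring).
  pose proof (Rabs_triang (h m) (- phi (S m))) as Ht. rewrite Rabs_Ropp in Ht. unfold Rminus. lra.
Qed.

(* Comparison with the telescoping sum of 1 / ((m - 1) m). *)
Lemma sum_inv_pow_tail n q j : (2 <= n)%nat ->
  sum_below (fun k => / INR (n + k) ^ (q + 2)) j
  <= / INR n ^ q * (/ (INR n - 1) - / (INR n + INR j - 1)).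
Proof.
  intros Hn. assert (Hx : 2 <= INR n) by (apply (le_INR 2 n); lia).
  induction j as [|j IH]; [simpl; rewrite Rplus_0_r; lra|].
  simpl sum_below. rewrite S_INR, plus_INR. pose proof (pos_INR j).
  replace (INR n + (INR j + 1) - 1) with (INR n + INR j) by ring.
  assert (Hy : INR n <= INR n + INR j) by lra.
  set (y := INR n + INR j) in *.
  assert (0 < INR n ^ q) by (apply pow_lt; lra).
  assert (E : / INR n ^ q * (/ (INR n - 1) - / y)
              = / INR n ^ q * (/ (INR n - 1) - / (y - 1)) + / (INR n ^ q * ((y - 1) * y)))
    by (field; repeat split; lra).
  rewrite E.
  apply Rplus_le_compat; [exact IH|]. apply Rinv_le_contravar.
  { apply Rmult_lt_0_compat; [lra|apply Rmult_lt_0_compat; lra]. }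
  rewrite pow_add. simpl. rewrite Rmult_1_r.
  assert (INR n ^ q <= y ^ q) by (apply pow_incr; lra).
  assert ((y - 1) * y <= y * y) by nra.
  apply Rmult_le_compat; nra.
Qed.

Lemma sum_inv_pow_tail_le n q j : (2 <= n)%nat ->
  sum_below (fun k => / INR (n + k) ^ (q + 2)) j <= 2 / INR n ^ (q + 1).
Proof.
  intros Hn. eapply Rle_trans; [apply sum_inv_pow_tail, Hn|].
  assert (Hx : 2 <= INR n) by (apply (le_INR 2 n); lia). pose proof (pos_INR j).
  assert (0 < / (INR n + INR j - 1)) by (apply Rinv_0_lt_compat; lra).
  assert (0 < INR n ^ q) by (apply pow_lt; lra).
  apply Rle_trans with (/ INR n ^ q * / (INR n - 1));
    [apply Rmult_le_compat_l; [apply Rlt_le, Rinv_0_lt_compat|]; lra|].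
  rewrite pow_add. simpl. rewrite Rmult_1_r.
  replace (2 / (INR n ^ q * INR n)) with (/ INR n ^ q * (2 / INR n)) by (field; lra).
  apply Rmult_le_compat_l; [apply Rlt_le, Rinv_0_lt_compat; lra|].
  apply Rmult_le_reg_l with ((INR n - 1) * INR n); [nra|]. field_simplify; lra.
Qed.

(* phi_n is the alternating sum of the h_(n+k). *)
Lemma alternating_recursion_decay (phi h : nat -> R) C A q n0 : (2 <= n0)%nat ->
  (forall n, (n0 <= n)%nat -> phi n + phi (S n) = h n) ->
  (forall n, (n0 <= n)%nat -> Rabs (h n) <= C / INR n ^ (q + 2)) ->
  (forall n, (n0 <= n)%nat -> Rabs (phi n) <= A / INR n) ->
  forall n, (n0 <= n)%nat -> Rabs (phi n) <= 2 * C / INR n ^ (q + 1).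
Proof.
  intros Hn0 Hrec Hh Hphi n Hn.
  assert (Hx : 2 <= INR n) by (apply (le_INR 2 n); lia).
  assert (HC : 0 <= C).
  { specialize (Hh n Hn). pose proof (Rabs_pos (h n)).
    assert (0 < INR n ^ (q + 2)) by (apply pow_lt; lra).
    apply Rmult_le_reg_r with (/ INR n ^ (q + 2)); [apply Rinv_0_lt_compat; lra|].
    rewrite Rmult_0_l. lra. }
  apply Rle_plus_epsilon. intros eps Heps.
  destruct (INR_unbounded (Rabs A / eps)) as [j Hj].
  pose proof (alternating_sum_bound phi h n0 Hrec j n Hn) as Hsum.
  assert (Htail : sum_below (fun k => Rabs (h (n + k)%nat)) j <= 2 * C / INR n ^ (q + 1)).
  { apply Rle_trans with (C * sum_below (fun k => / INR (n + k) ^ (q + 2)) j).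
    - rewrite <- sum_below_scal. apply sum_below_le. intros k _. apply Hh. lia.
    - replace (2 * C / INR n ^ (q + 1)) with (C * (2 / INR n ^ (q + 1))) by (unfold Rdiv; ring).
      apply Rmult_le_compat_l; [exact HC|]. apply sum_inv_pow_tail_le. lia. }
  assert (Hlast : Rabs (phi (n + j)%nat) <= eps).
  { assert (Hj0 : 0 < INR j)
      by (pose proof (Rdiv_le_0_compat (Rabs A) eps (Rabs_pos A) Heps); lra).
    eapply Rle_trans; [apply Hphi; lia|]. rewrite plus_INR. unfold Rdiv.
    apply Rle_trans with (Rabs A * / INR j).
    - apply Rle_trans with (Rabs A * / (INR n + INR j)).
      + apply Rmult_le_compat_r; [apply Rlt_le, Rinv_0_lt_compat; lra|apply RRle_abs].
      + apply Rmult_le_compat_l; [apply Rabs_pos|apply Rinv_le_contravar; lra].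
    - apply Rmult_le_reg_r with (INR j); [lra|]. rewrite Rmult_assoc, Rinv_l by lra.
      apply Rmult_lt_compat_l with (r := eps) in Hj; [|lra].
      replace (eps * (Rabs A / eps)) with (Rabs A) in Hj by (field; lra). lra. }
  lra.
Qed.

Lemma inv_INR_bounds n : (2 <= n)%nat -> 0 < / INR n <= 1/2.
Proof.
  intros Hn. assert (2 <= INR n) by (apply (le_INR 2 n); lia). split.
  - apply Rinv_0_lt_compat. lra.
  - apply Rle_trans with (/ 2); [apply Rinv_le_contravar|]; lra.
Qed.

Lemma ln_ratio_le u : 0 < u -> ln (1 + 2 * u) - ln (1 + u) <= u.
Proof.
  intros Hu. rewrite <- ln_div by lra.
  apply Rle_trans with (ln (1 + u)); [|apply ln_1_plus_bounds; lra].
  apply ln_le; [apply Rdiv_lt_0_compat; lra|].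
  apply Rmult_le_reg_r with (1 + u); [lra|]. field_simplify; nra.
Qed.

Lemma ln_omega_ratio_expansion B t q : is_bernoulli_polys B -> is_t_sequence B t ->
  exists C, forall n, (2 <= n)%nat ->
    Rabs (ln (omega_ratio n) - ln (1 + / INR n) * polyval t (q + 2) (/ INR n))
    <= C / INR n ^ (q + 1).
Proof.
  intros HB Ht. destruct (functional_eq_remainder B t (S q) HB Ht) as [C HC].
  set (T := fun n : nat => ln (1 + / INR n) * polyval t (q + 2) (/ INR n)).
  set (A := 1 + sum_below (fun i => Rabs (t i)) (q + 2)).
  exists (2 * C). intros n Hn.
  apply (alternating_recursion_decay (fun n => ln (omega_ratio n) - T n)
           (fun n => ln (1 + 2 * / INR n) - ln (1 + / INR n) - T n - T (S n)) C A q 2);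
    [lia| | | |exact Hn]; clear n Hn; intros n Hn; pose proof (inv_INR_bounds n Hn) as Hu.
  - rewrite <- ln_omega_ratio_add_succ by lia. lra.
  - specialize (HC (/ INR n) Hu). rewrite next_inv_INR in HC by lia.
    rewrite <- Rabs_Ropp. unfold Rdiv. rewrite <- pow_inv.
    unfold T. replace (q + 2)%nat with (S (S q)) by lia.
    match goal with |- Rabs ?e <= _ => replace e with
      (ln (1 + / INR n) * polyval t (S (S q)) (/ INR n)
       + ln (1 + / INR (S n)) * polyval t (S (S q)) (/ INR (S n))
       - (ln (1 + 2 * / INR n) - ln (1 + / INR n))) by ring end.
    exact HC.
  - pose proof (ln_omega_ratio_nonneg n ltac:(lia)).
    pose proof (ln_omega_ratio_nonneg (S n) ltac:(lia)).
    pose proof (ln_omega_ratio_add_succ n ltac:(lia)).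
    pose proof (ln_ratio_le (/ INR n) ltac:(lra)).
    pose proof (ln_1_plus_bounds (/ INR n) ltac:(lra)).
    pose proof (polyval_bound t (q + 2) (/ INR n) ltac:(lra)).
    assert (Rabs (T n) <= / INR n * sum_below (fun i => Rabs (t i)) (q + 2)).
    { unfold T. rewrite Rabs_mult, (Rabs_pos_eq (ln _)) by lra.
      apply Rmult_le_compat; try lra; apply Rabs_pos. }
    eapply Rle_trans; [apply Rabs_triang|].
    rewrite Rabs_Ropp, (Rabs_pos_eq (ln (omega_ratio n))) by lra.
    unfold A, Rdiv. lra.
Qed.

Lemma polyval_sub_bound c q p u : (q <= p)%nat -> 0 < u <= 1 ->
  Rabs (polyval c p u - polyval c q u) <= sum_below (fun i => Rabs (c i)) p * u ^ q.
Proof.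
  intros Hqp Hu. induction Hqp as [|p Hqp IH].
  - rewrite Rminus_diag_eq, Rabs_R0 by reflexivity.
    apply Rmult_le_pos; [apply sum_below_nonneg; intros; apply Rabs_pos|apply pow_le; lra].
  - unfold polyval in *. simpl.
    replace (sum_below (fun m => c m * u ^ m) p + c p * u ^ p - sum_below (fun m => c m * u ^ m) q)
      with ((sum_below (fun m => c m * u ^ m) p - sum_below (fun m => c m * u ^ m) q)
            + c p * u ^ p) by ring.
    eapply Rle_trans; [apply Rabs_triang|]. rewrite Rmult_plus_distr_r.
    apply Rplus_le_compat; [exact IH|].
    rewrite Rabs_mult, (Rabs_pos_eq (u ^ p)) by (apply pow_le; lra).
    apply Rmult_le_compat_l; [apply Rabs_pos|].
    replace p with (q + (p - q))%nat by lia. rewrite pow_add.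
    rewrite <- (Rmult_1_r (u ^ q)) at 2.
    apply Rmult_le_compat_l; [apply pow_le; lra|].
    rewrite <- (pow1 (p - q)). apply pow_incr. lra.
Qed.

Lemma sum_n_polyval_inv (t : nat -> R) n N :
  sum_n (fun j => t j / INR n ^ j) N = polyval t (S N) (/ INR n).
Proof.
  rewrite sum_n_sum_below. apply sum_below_ext. intros. rewrite pow_inv. reflexivity.
Qed.

Lemma ln_mul_polyval_truncate c q p u : (q <= p)%nat -> 0 < u <= 1 ->
  Rabs (ln (1 + u) * polyval c p u - ln (1 + u) * polyval c q u)
  <= sum_below (fun i => Rabs (c i)) p * u ^ S q.
Proof.
  intros Hqp Hu. pose proof (ln_1_plus_bounds u ltac:(lra)) as [Hl0 Hl1].
  pose proof (polyval_sub_bound c q p u Hqp Hu).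
  rewrite <- Rmult_minus_distr_l, Rabs_mult, (Rabs_pos_eq (ln _)) by lra.
  replace (sum_below (fun i => Rabs (c i)) p * u ^ S q)
    with (u * (sum_below (fun i => Rabs (c i)) p * u ^ q)) by (simpl; ring).
  apply Rmult_le_compat; try lra; apply Rabs_pos.
Qed.

Theorem theorem17 (B : nat -> R -> R) (t : nat -> R) :
  is_bernoulli_polys B ->
  is_t_sequence B t ->
  forall N : nat,
    exists C : R, exists M : nat,
      forall n : nat, (M <= n)%nat -> (1 <= n)%nat ->
        Rabs (ln (Omega n ^ 2 / (Omega (n - 1) * Omega (n + 1)))
              - ln (1 + 1 / INR n) * sum_n (fun j => t j / INR n ^ j) N)
        <= C / INR n ^ (N + 2).
Proof.
  intros HB Ht N.
  destruct (ln_omega_ratio_expansion B t (S N) HB Ht) as [C HC].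
  exists (C + sum_below (fun i => Rabs (t i)) (S N + 2)), 2%nat. intros n Hn _.
  change (Omega n ^ 2 / (Omega (n - 1) * Omega (n + 1))) with (omega_ratio n).
  rewrite sum_n_polyval_inv. unfold Rdiv at 1. rewrite Rmult_1_l.
  specialize (HC n Hn). pose proof (inv_INR_bounds n Hn) as Hu.
  pose proof (ln_mul_polyval_truncate t (S N) (S N + 2) (/ INR n) ltac:(lia) ltac:(lra)) as Htr.
  rewrite pow_inv in Htr.
  replace (S N + 1)%nat with (N + 2)%nat in HC by lia.
  replace (S (S N)) with (N + 2)%nat in Htr by lia.
  rewrite Rdiv_plus_distr.
  eapply Rle_trans; [|apply Rplus_le_compat; [exact HC|exact Htr]].
  eapply Rle_trans; [|apply Rabs_triang]. right. f_equal. ring.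
Qed.
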